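(* Let $q'>0$, $e'\in(0,1)$, $q_{\max}>0$, $\mathcal D_3=\{(\omega,\omega'):0\le\omega\le\pi/2,\ 0\le\omega'\le\pi\}$, $\mathcal D_4=\{(q,e):0<q\le q_{\max},\ 0\le e\le1\}$. Then: (i) for each $(q,e)\in\mathcal D_4$ and $(\omega,\omega')\in\mathcal D_3$, $$\delta_{\rm int}(q,e,\omega,\omega')\ge\delta_{\rm int}(q,e,0,\pi)=q'-\frac{q(1+e)}{1-e},\qquad \delta_{\rm ext}(q,e,\omega,\omega')\ge\delta_{\rm ext}(q,e,0,\pi)=q-Q';$$ hence for given $(q,e)$ there are internal nodes for all $(\omega,\omega')\in\mathcal D_3$ iff $q'-\frac{q(1+e)}{1-e}>0$, and external nodes for all $(\omega,\omega')\in\mathcal D_3$ iff $q-Q'>0$; (ii) if $q'-\frac{q(1+e)}{1-e}\le0$ and $q-Q'\le0$, then there exists $(\omega,\omega')\in\mathcal D_3$ with $d^+d^-=0$.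
   Context: For $q>0$, $e\in[0,1]$ and angles $\omega,\omega'$, define $r_{\pm}=\frac{q(1+e)}{1\pm e\cos\omega}$, $r'_{\pm}=\frac{q'(1+e')}{1\pm e'\cos\omega'}$ (extended-real values allowed; $\frac{q(1+e)}{1-e}=+\infty$ for $e=1$), $d^+=r'_+-r_+$, $d^-=r'_--r_-$, $\delta_{\rm int}=\min\{d^+,d^-\}$, $\delta_{\rm ext}=\min\{-d^+,-d^-\}$, $Q'=\frac{q'(1+e')}{1-e'}$. Internal nodes: $d^\pm>0$; external nodes: $d^\pm<0$. *)

From Stdlib Require Import Reals Lra.
Open Scope R_scope.

Inductive ER : Type := Fin (x : R) | PInf | NInf.

(* a / b for a > 0 and b >= 0, with a / 0 = +oo (the paper's convention). *)
Definition epos_div (a b : R) : ER :=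
  if Req_EM_T b 0 then PInf else Fin (a / b).

Definition eopp (x : ER) : ER :=
  match x with Fin a => Fin (- a) | PInf => NInf | NInf => PInf end.

(* extended addition; the (never used here) case +oo + -oo is set to -oo *)
Definition eadd (x y : ER) : ER :=
  match x, y with
  | Fin a, Fin b => Fin (a + b)
  | NInf, _ | _, NInf => NInf
  | PInf, _ | _, PInf => PInf
  end.

Definition esub (x y : ER) : ER := eadd x (eopp y).

Definition ele (x y : ER) : Prop :=
  match x, y with
  | NInf, _ => True
  | _, PInf => True
  | Fin a, Fin b => a <= b
  | _, _ => False
  end.

Definition elt (x y : ER) : Prop := ele x y /\ x <> y.

Definition emin (x y : ER) : ER :=
  match x, y with
  | NInf, _ | _, NInf => NInf
  | PInf, _ => y
  | _, PInf => x
  | Fin a, Fin b => Fin (Rmin a b)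
  end.

Definition r_plus (q e w : R) : ER := epos_div (q * (1 + e)) (1 + e * cos w).
Definition r_minus (q e w : R) : ER := epos_div (q * (1 + e)) (1 - e * cos w).

Definition d_plus (q' e' q e w w' : R) : ER := esub (r_plus q' e' w') (r_plus q e w).
Definition d_minus (q' e' q e w w' : R) : ER := esub (r_minus q' e' w') (r_minus q e w).

Definition delta_int (q' e' q e w w' : R) : ER :=
  emin (d_plus q' e' q e w w') (d_minus q' e' q e w w').
Definition delta_ext (q' e' q e w w' : R) : ER :=
  emin (eopp (d_plus q' e' q e w w')) (eopp (d_minus q' e' q e w w')).

(* Q' = q'(1+e')/(1-e') ; finite since e' < 1 in the theorem *)
Definition Qp (q' e' : R) : R := q' * (1 + e') / (1 - e').

Definition internal_nodes (q' e' q e w w' : R) : Prop :=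
  elt (Fin 0) (d_plus q' e' q e w w') /\ elt (Fin 0) (d_minus q' e' q e w w').
Definition external_nodes (q' e' q e w w' : R) : Prop :=
  elt (d_plus q' e' q e w w') (Fin 0) /\ elt (d_minus q' e' q e w w') (Fin 0).

Definition D3 (w w' : R) : Prop := 0 <= w <= PI / 2 /\ 0 <= w' <= PI.
Definition D4 (qmax q e : R) : Prop := 0 < q <= qmax /\ 0 <= e <= 1.

(** The node condition compares the two conics along the line of nodes.  For
    every orientation the radii of the orbit (q, e) lie between its perihelion
    q and its aphelion q(1+e)/(1-e) (possibly +oo), and those of the orbit
    (q', e') between q' and Q'.  Hence d^+ and d^- are bounded below by
    q' - q(1+e)/(1-e) and above by Q' - q, and both bounds are attained at
    (w, w') = (0, pi), which gives (i).  For (ii), when q' lies between q and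
    the aphelion of (q, e) and q lies between q' and Q', one radius can be
    matched exactly by choosing a cosine: on the primed orbit if q' <= q, and
    otherwise on the orbit (q, e), through r_+ if q' <= q(1+e) and through r_-
    beyond. *)
From Stdlib Require Import Reals Lra.
Open Scope R_scope.

Lemma ele_trans x y z : ele x y -> ele y z -> ele x z.
Proof. destruct x, y, z; simpl; auto; try contradiction; lra. Qed.

Lemma ele_antisym x y : ele x y -> ele y x -> x = y.
Proof. destruct x, y; simpl; try contradiction; auto; intros; f_equal; lra. Qed.

Lemma elt_ele_trans x y z : elt x y -> ele y z -> elt x z.
Proof.
intros [Hxy Hne] Hyz. split; [exact (ele_trans _ _ _ Hxy Hyz)|].
intros ->. apply Hne, ele_antisym; assumption.
Qed.

Lemma elt_Fin_iff a b : elt (Fin a) (Fin b) <-> a < b.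
Proof.
unfold elt; simpl. split.
- intros [Hle Hne]. destruct Hle as [Hlt|Heq]; [exact Hlt|]. now subst.
- intros Hlt. split; [lra|]. intros E. injection E. lra.
Qed.

(* Since -oo absorbs even +oo, extended addition is monotone. *)
Lemma eadd_le_compat a a' b b' : ele a a' -> ele b b' -> ele (eadd a b) (eadd a' b').
Proof. destruct a, a', b, b'; simpl; auto; try contradiction; lra. Qed.

Lemma eopp_le_contravar x y : ele x y -> ele (eopp y) (eopp x).
Proof. destruct x, y; simpl; auto; lra. Qed.

Lemma eopp_involutive x : eopp (eopp x) = x.
Proof. destruct x; simpl; auto; now rewrite Ropp_involutive. Qed.

Lemma eopp_lt_contravar x y : elt x y -> elt (eopp y) (eopp x).
Proof.
intros [Hle Hne]. split; [now apply eopp_le_contravar|].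
intros E. apply Hne. now rewrite <- (eopp_involutive x), <- E, eopp_involutive.
Qed.

Lemma elt_0_eopp x : elt (Fin 0) (eopp x) -> elt x (Fin 0).
Proof.
intros H. apply eopp_lt_contravar in H.
rewrite eopp_involutive in H. simpl in H. now rewrite Ropp_0 in H.
Qed.

Lemma esub_le_compat a a' b b' : ele a a' -> ele b' b -> ele (esub a b) (esub a' b').
Proof. intros. apply eadd_le_compat; [|apply eopp_le_contravar]; assumption. Qed.

Lemma emin_glb x a b : ele x a -> ele x b -> ele x (emin a b).
Proof. destruct x, a, b; simpl; auto; try contradiction; intros; now apply Rmin_glb. Qed.

Lemma emin_left x y : ele x y -> emin x y = x.
Proof. destruct x, y; simpl; auto; try contradiction; intros; f_equal; now apply Rmin_left. Qed.

Lemma emin_right x y : ele y x -> emin x y = y.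
Proof. destruct x, y; simpl; auto; try contradiction; intros; f_equal; now apply Rmin_right. Qed.

Notation aphelion q e := (epos_div (q * (1 + e)) (1 - e)).

Lemma epos_div_Fin a b : b <> 0 -> epos_div a b = Fin (a / b).
Proof. intros Hb. unfold epos_div. now destruct (Req_EM_T b 0). Qed.

Lemma aphelion_Qp q e : e < 1 -> aphelion q e = Fin (Qp q e).
Proof. intros He. apply epos_div_Fin. lra. Qed.

Lemma conic_radius_bounds q e b : 0 < q -> 0 <= e <= 1 -> 1 - e <= b <= 1 + e ->
  ele (Fin q) (epos_div (q * (1 + e)) b) /\
  ele (epos_div (q * (1 + e)) b) (aphelion q e).
Proof.
intros Hq He Hb. unfold epos_div.
destruct (Req_EM_T b 0) as [Hb0|Hb0].
- destruct (Req_EM_T (1 - e) 0); [simpl; auto | lra].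
- set (r := q * (1 + e) / b).
  assert (Hr : r * b = q * (1 + e)) by (unfold r; field; exact Hb0).
  split; [simpl; nra|].
  destruct (Req_EM_T (1 - e) 0) as [|He1]; [simpl; auto|].
  set (s := q * (1 + e) / (1 - e)).
  assert (Hs : s * (1 - e) = q * (1 + e)) by (unfold s; field; exact He1).
  assert (0 <= s) by nra. simpl. nra.
Qed.

Lemma r_plus_bounds q e w : 0 < q -> 0 <= e <= 1 ->
  ele (Fin q) (r_plus q e w) /\ ele (r_plus q e w) (aphelion q e).
Proof. intros. pose proof (COS_bound w). apply conic_radius_bounds; auto; nra. Qed.

Lemma r_minus_bounds q e w : 0 < q -> 0 <= e <= 1 ->
  ele (Fin q) (r_minus q e w) /\ ele (r_minus q e w) (aphelion q e).
Proof. intros. pose proof (COS_bound w). apply conic_radius_bounds; auto; nra. Qed.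

Lemma r_plus_0 q e : 0 <= e -> r_plus q e 0 = Fin q.
Proof.
intros He. unfold r_plus. rewrite cos_0, Rmult_1_r, epos_div_Fin by lra.
f_equal. field. lra.
Qed.

Lemma r_minus_0 q e : r_minus q e 0 = aphelion q e.
Proof. unfold r_minus. now rewrite cos_0, Rmult_1_r. Qed.

Lemma r_plus_PI q e : r_plus q e PI = aphelion q e.
Proof. unfold r_plus. rewrite cos_PI. now replace (1 + e * -1) with (1 - e) by ring. Qed.

Lemma r_minus_PI q e : 0 <= e -> r_minus q e PI = Fin q.
Proof.
intros He. unfold r_minus. rewrite cos_PI, epos_div_Fin by lra.
f_equal. field. lra.
Qed.

Lemma radius_gap_bounds q' Q' r' q P r :
  ele (Fin q') r' -> ele r' (Fin Q') -> ele (Fin q) r -> ele r P ->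
  ele (esub (Fin q') P) (esub r' r) /\ ele (Fin (q - Q')) (eopp (esub r' r)).
Proof.
intros. split; [now apply esub_le_compat|].
replace (q - Q') with (- (Q' + - q)) by ring.
apply (eopp_le_contravar (esub r' r) (esub (Fin Q') (Fin q))).
now apply esub_le_compat.
Qed.

Section NodeDistances.

Variables q' e' q e : R.
Hypothesis hq' : 0 < q'.
Hypothesis he' : 0 < e' < 1.
Hypothesis hq : 0 < q.
Hypothesis he : 0 <= e <= 1.

Let he'01 : 0 <= e' <= 1.
Proof. lra. Qed.

Lemma d_plus_bounds w w' :
  ele (esub (Fin q') (aphelion q e)) (d_plus q' e' q e w w') /\
  ele (Fin (q - Qp q' e')) (eopp (d_plus q' e' q e w w')).
Proof.
destruct (r_plus_bounds q' e' w' hq' he'01) as [H1 H2].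
destruct (r_plus_bounds q e w hq he) as [H3 H4].
rewrite aphelion_Qp in H2 by lra. now apply radius_gap_bounds.
Qed.

Lemma d_minus_bounds w w' :
  ele (esub (Fin q') (aphelion q e)) (d_minus q' e' q e w w') /\
  ele (Fin (q - Qp q' e')) (eopp (d_minus q' e' q e w w')).
Proof.
destruct (r_minus_bounds q' e' w' hq' he'01) as [H1 H2].
destruct (r_minus_bounds q e w hq he) as [H3 H4].
rewrite aphelion_Qp in H2 by lra. now apply radius_gap_bounds.
Qed.

Lemma delta_int_ge w w' :
  ele (esub (Fin q') (aphelion q e)) (delta_int q' e' q e w w').
Proof. apply emin_glb; [apply d_plus_bounds | apply d_minus_bounds]. Qed.

Lemma delta_ext_ge w w' : ele (Fin (q - Qp q' e')) (delta_ext q' e' q e w w').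
Proof. apply emin_glb; [apply d_plus_bounds | apply d_minus_bounds]. Qed.

Lemma d_plus_0_PI : d_plus q' e' q e 0 PI = Fin (Qp q' e' - q).
Proof.
unfold d_plus. rewrite r_plus_PI, aphelion_Qp, r_plus_0 by lra. reflexivity.
Qed.

Lemma d_minus_0_PI : d_minus q' e' q e 0 PI = esub (Fin q') (aphelion q e).
Proof. unfold d_minus. now rewrite r_minus_PI, r_minus_0 by lra. Qed.

Lemma delta_int_0_PI : delta_int q' e' q e 0 PI = esub (Fin q') (aphelion q e).
Proof.
unfold delta_int. rewrite d_minus_0_PI. apply emin_right, d_plus_bounds.
Qed.

Lemma delta_ext_0_PI : delta_ext q' e' q e 0 PI = Fin (q - Qp q' e').
Proof.
unfold delta_ext. rewrite d_plus_0_PI, emin_left.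
- simpl. f_equal. ring.
- replace (eopp (Fin (Qp q' e' - q))) with (Fin (q - Qp q' e'))
    by (simpl; f_equal; ring).
  apply d_minus_bounds.
Qed.

End NodeDistances.

Lemma cos_onto c : -1 <= c <= 1 -> exists w, 0 <= w <= PI /\ cos w = c.
Proof. intros. exists (acos c). split; [apply acos_bound | now apply cos_acos]. Qed.

Lemma cos_onto_nonneg c : 0 <= c <= 1 -> exists w, 0 <= w <= PI / 2 /\ cos w = c.
Proof.
intros Hc. destruct (cos_onto c) as [w [Hw Hcos]]; [lra|].
exists w. repeat split; try lra.
destruct (Rle_dec w (PI / 2)) as [|Hgt]; [assumption|].
assert (cos w < 0) by (apply cos_lt_0; lra). lra.
Qed.

Lemma conic_radius_attained a e T lo hi : 0 < a -> 0 < e -> 0 < T ->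
  T * (1 + e * lo) <= a <= T * (1 + e * hi) ->
  exists c, lo <= c <= hi /\ epos_div a (1 + e * c) = Fin T.
Proof.
intros Ha He HT Hbounds.
set (u := a / T).
assert (Hu : u * T = a) by (unfold u; field; lra).
assert (Hu_bounds : 1 + e * lo <= u <= 1 + e * hi) by (split; nra).
exists ((u - 1) / e).
replace (1 + e * ((u - 1) / e)) with u by (field; lra).
assert (Hc : (u - 1) / e * e = u - 1) by (field; lra).
split; [split; nra|].
rewrite epos_div_Fin by nra. f_equal. unfold u. field. lra.
Qed.

Lemma aphelion_gap_nonpos q' q e : 0 < q -> 0 <= e <= 1 ->
  ele (esub (Fin q') (aphelion q e)) (Fin 0) -> q' * (1 - e) <= q * (1 + e).
Proof.
intros Hq He H. unfold epos_div in H.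
destruct (Req_EM_T (1 - e) 0) as [He1|He1]; [rewrite He1; nra|].
simpl in H. set (s := q * (1 + e) / (1 - e)) in H.
assert (Hs : s * (1 - e) = q * (1 + e)) by (unfold s; field; exact He1).
nra.
Qed.

Lemma node_crossing q' e' q e : 0 < q' -> 0 < e' < 1 -> 0 < q -> 0 <= e <= 1 ->
  q' * (1 - e) <= q * (1 + e) -> q <= Qp q' e' ->
  exists w w', D3 w w' /\
    (d_plus q' e' q e w w' = Fin 0 \/ d_minus q' e' q e w w' = Fin 0).
Proof.
intros hq' he' hq he Hinner Houter. pose proof PI_RGT_0.
assert (HQ : Qp q' e' * (1 - e') = q' * (1 + e')) by (unfold Qp; field; lra).
destruct (Rle_dec q' q) as [Hle|Hgt].
- destruct (conic_radius_attained (q' * (1 + e')) e' q (-1) 1) as [c [Hc Hr]];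
    try split; try nra.
  destruct (cos_onto c Hc) as [w' [Hw' Hcos]].
  exists 0, w'. split; [split; lra|]. left.
  unfold d_plus. rewrite r_plus_0 by lra. unfold r_plus. rewrite Hcos, Hr.
  simpl. f_equal. ring.
- destruct (Rle_dec q' (q * (1 + e))) as [Hplus|Hminus].
  + destruct (conic_radius_attained (q * (1 + e)) e q' 0 1) as [c [Hc Hr]];
      try split; try nra.
    destruct (cos_onto_nonneg c Hc) as [w [Hw Hcos]].
    exists w, 0. split; [split; lra|]. left.
    unfold d_plus. rewrite (r_plus_0 q') by lra. unfold r_plus. rewrite Hcos, Hr.
    simpl. f_equal. ring.
  + destruct (conic_radius_attained (q * (1 + e)) e q' (-1) 0) as [c [Hc Hr]];
      try split; try nra.
    destruct (cos_onto_nonneg (- c)) as [w [Hw Hcos]]; [lra|].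
    exists w, PI. split; [split; lra|]. right.
    unfold d_minus. rewrite (r_minus_PI q') by lra. unfold r_minus. rewrite Hcos.
    replace (1 - e * - c) with (1 + e * c) by ring. rewrite Hr.
    simpl. f_equal. ring.
Qed.

Theorem lemma5 (q' e' qmax : R) (hq' : 0 < q') (he' : 0 < e' < 1) (hqmax : 0 < qmax) :
  (* (i) *)
  (forall q e, D4 qmax q e ->
     delta_int q' e' q e 0 PI = esub (Fin q') (epos_div (q * (1 + e)) (1 - e)) /\
     delta_ext q' e' q e 0 PI = Fin (q - Qp q' e') /\
     (forall w w', D3 w w' ->
        ele (delta_int q' e' q e 0 PI) (delta_int q' e' q e w w') /\
        ele (delta_ext q' e' q e 0 PI) (delta_ext q' e' q e w w'))) /\
  (forall q e, D4 qmax q e ->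
     ((forall w w', D3 w w' -> internal_nodes q' e' q e w w') <->
        elt (Fin 0) (esub (Fin q') (epos_div (q * (1 + e)) (1 - e)))) /\
     ((forall w w', D3 w w' -> external_nodes q' e' q e w w') <->
        0 < q - Qp q' e')) /\
  (* (ii) *)
  (forall q e, D4 qmax q e ->
     ele (esub (Fin q') (epos_div (q * (1 + e)) (1 - e))) (Fin 0) ->
     q - Qp q' e' <= 0 ->
     exists w w', D3 w w' /\
       (d_plus q' e' q e w w' = Fin 0 \/ d_minus q' e' q e w w' = Fin 0)).
Proof.
assert (D3_0_PI : D3 0 PI) by (pose proof PI_RGT_0; split; lra).
split; [|split]; intros q e [[hq _] he].
- rewrite delta_int_0_PI, delta_ext_0_PI by assumption.
  repeat split; [apply delta_int_ge | apply delta_ext_ge]; assumption.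
- split; split.
  + intros Hnodes. rewrite <- (d_minus_0_PI q' e') by assumption.
    apply (Hnodes 0 PI D3_0_PI).
  + intros Hgap w w' _.
    split; (eapply elt_ele_trans; [exact Hgap|]);
      [apply d_plus_bounds | apply d_minus_bounds]; assumption.
  + intros Hnodes. destruct (Hnodes 0 PI D3_0_PI) as [Hplus _].
    rewrite d_plus_0_PI, elt_Fin_iff in Hplus by assumption. lra.
  + intros Hgap w w' _.
    assert (Hpos : elt (Fin 0) (Fin (q - Qp q' e'))) by now apply elt_Fin_iff.
    split; apply elt_0_eopp; (eapply elt_ele_trans; [exact Hpos|]);
      [apply d_plus_bounds | apply d_minus_bounds]; assumption.
- intros Hgap Hext. apply node_crossing; try assumption.
  + now apply aphelion_gap_nonpos.
  + lra.
Qed.
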